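(* Let $G\subseteq\mathrm{GL}_n(\mathbb{R})$ be a group of order two with fundamental invariants $\pi_1,\dots,\pi_m$ and Hilbert map $\Pi=(\pi_1,\dots,\pi_m)$. For $i=1,\dots,n$ let $f_i=X_i-\mathcal{R}_G(X_i)$, and let $f=\sum_{i=1}^n f_i^2$. Then $f\in\mathbb{R}[\underline{X}]^G$ and \[\Pi(\mathbb{R}^n)=\{z\in V_{\mathbb{R}}(I_\Pi)\mid \phi_z(f)\ge0\}.\]
   Context: $\mathbb{R}[\underline{X}]=\mathbb{R}[X_1,\dots,X_n]$, $G$ acts by $h^\sigma(x)=h(\sigma^{-1}x)$, $\mathbb{R}[\underline{X}]^G=\mathbb{R}[\pi_1,\dots,\pi_m]$, and $\mathcal{R}_G(h)=\frac{1}{|G|}\sum_{\sigma\in G}h^\sigma$. $I_\Pi$ is the ideal of relations among $\pi_1,\dots,\pi_m$, $V_{\mathbb{R}}(I_\Pi)\subseteq\mathbb{R}^m$ its real zero set, and for $z\in V_{\mathbb{R}}(I_\Pi)$, $\phi_z:\mathbb{R}[\underline{X}]^G\to\mathbb{R}$ is $g(\pi_1,\dots,\pi_m)\mapsto g(z)$. *)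

From HB Require Import structures.
From mathcomp Require Import all_boot all_order all_algebra.
From mathcomp Require Import reals.
From mathcomp Require Import mpoly.
From Stdlib Require Import ClassicalEpsilon.

Set Implicit Arguments.
Unset Strict Implicit.
Unset Printing Implicit Defensive.

Import Order.TTheory GRing.Theory Num.Theory.
Local Open Scope ring_scope.

Section Defs.
Variables (R : realType) (n m : nat).

Definition is_finite_subgroup_GL (G : seq 'M[R]_n) : Prop :=
  [/\ uniq G, (1%:M : 'M[R]_n) \in G,
      (forall a, a \in G -> a \in unitmx /\ invmx a \in G) &
      (forall a b, a \in G -> b \in G -> a *m b \in G)].

(* Action h^sigma (x) = h (sigma^{-1} x):  substitute X_i by
   sum_j (sigma^{-1})_{ij} X_j. *)
Definition mact (s : 'M[R]_n) (h : {mpoly R[n]}) : {mpoly R[n]} :=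
  h \mPo [tuple (\sum_(j < n) (invmx s) i j *: 'X_j) | i < n].

Definition is_invariant (G : seq 'M[R]_n) (h : {mpoly R[n]}) : Prop :=
  forall s, s \in G -> mact s h = h.

Definition reynolds (G : seq 'M[R]_n) (h : {mpoly R[n]}) : {mpoly R[n]} :=
  (size G)%:R^-1 *: \sum_(s <- G) mact s h.

Definition fundamental_invariants (G : seq 'M[R]_n) (pi : 'I_m -> {mpoly R[n]})
  : Prop :=
  (forall i, is_invariant G (pi i)) /\
  (forall h, is_invariant G h <-> exists g : {mpoly R[m]}, h = g \mPo [tuple pi i | i < m]).

Definition hilbert_map (pi : 'I_m -> {mpoly R[n]}) (x : 'I_n -> R) : 'I_m -> R :=
  fun i => (pi i).@[x].

Definition relation_ideal (pi : 'I_m -> {mpoly R[n]}) (g : {mpoly R[m]}) : Prop :=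
  g \mPo [tuple pi i | i < m] = 0.

Definition real_variety (pi : 'I_m -> {mpoly R[n]}) (z : 'I_m -> R) : Prop :=
  forall g, relation_ideal pi g -> g.@[z] = 0.

(* phi_z : g(pi_1..pi_m) |-> g(z), with g chosen (well defined for z in V_R(I_Pi)). *)
Definition phi (pi : 'I_m -> {mpoly R[n]}) (z : 'I_m -> R) (h : {mpoly R[n]}) : R :=
  (epsilon (inhabits (0 : {mpoly R[m]}))
           (fun g : {mpoly R[m]} => g \mPo [tuple pi i | i < m] = h)).@[z].

End Defs.

From HB Require Import structures.
From mathcomp Require Import all_boot all_order all_algebra.
From mathcomp Require Import reals.
From mathcomp Require Import mpoly.
From mathcomp Require Import ring.
From Stdlib Require Import ClassicalEpsilon FunctionalExtensionality.

Set Implicit Arguments.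
Unset Strict Implicit.
Unset Printing Implicit Defensive.
Import Order.TTheory GRing.Theory Num.Theory.
Local Open Scope ring_scope.

(** Write G = {1, s} with s an involution and split each variable as
    X_i = symX_i + antiX_i, where symX_i = (X_i + (sX)_i)/2 is fixed by s and
    antiX_i = (X_i - (sX)_i)/2 changes sign; then f = sum_i antiX_i^2.  Splitting
    every polynomial into an s-fixed part and a part sum_i antiX_i g_i shows that
    the invariant ring is generated by the symX_i and the products antiX_i antiX_j.
    For z in V(I_Pi), phi_z is a ring morphism on the invariants, so
    a_i = phi_z(symX_i) is fixed by s and c_ij = phi_z(antiX_i antiX_j) is a
    rank-one matrix with s c = -c and trace phi_z(f).  If that trace is
    nonnegative then c = b b^T with s b = -b, and x = a + b agrees with phi_z on
    the generators, hence on every invariant; in particular z = Pi(x). *)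

Section Involution.
Variables (R : numFieldType) (n : nat) (s : 'M[R]_n).

Definition linX i : {mpoly R[n]} := \sum_(j < n) s i j *: 'X_j.
Definition act := comp_mpoly [tuple linX i | i < n].
HB.instance Definition _ := GRing.LRMorphism.on act.
Definition symX i : {mpoly R[n]} := 2^-1 *: ('X_i + linX i).
Definition antiX i : {mpoly R[n]} := 2^-1 *: ('X_i - linX i).

Lemma act_X i : act 'X_i = linX i.
Proof. by rewrite /act comp_mpolyXU -tnth_nth tnth_mktuple. Qed.

Lemma symX_add_antiX i : symX i + antiX i = 'X_i.
Proof.
rewrite -scalerDr addrACA subrr addr0 -mulr2n -scaler_nat scalerA.
by rewrite mulVf ?scale1r ?pnatr_eq0.
Qed.

Lemma meval_linX (x : 'I_n -> R) i : (linX i).@[x] = \sum_(j < n) s i j * x j.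
Proof. by rewrite raddf_sum; apply: eq_bigr => j _; rewrite /= mevalZ mevalXU. Qed.

Lemma meval_symX_antiX (a b : 'I_n -> R) i :
    (forall i, \sum_(j < n) s i j * a j = a i) ->
    (forall i, \sum_(j < n) s i j * b j = - b i) ->
  (symX i).@[a \+ b] = a i /\ (antiX i).@[a \+ b] = b i.
Proof.
move=> sa sb; have ax : (linX i).@[a \+ b] = a i - b i.
  by rewrite meval_linX; under eq_bigr do rewrite mulrDr; rewrite big_split /= sa sb.
by rewrite /symX /antiX !mevalZ mevalD mevalB mevalXU ax /=; split; field.
Qed.

Hypothesis s_invol : s *m s = 1%:M.

Lemma sum_linX i : \sum_(j < n) s i j *: linX j = 'X_i.
Proof.
under eq_bigr do rewrite scaler_sumr.
rewrite exchange_big /=.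
under eq_bigr do (under eq_bigr do rewrite scalerA; rewrite -scaler_suml).
have sij k : \sum_(j < n) s i j * s j k = (i == k)%:R.
  by have := congr1 (fun A : 'M_n => A i k) s_invol; rewrite !mxE.
under eq_bigr do rewrite sij.
rewrite (bigD1 i) //= big1 ?addr0 ?eqxx ?scale1r // => k /negbTE ki.
by rewrite eq_sym ki scale0r.
Qed.

Lemma act_linX i : act (linX i) = 'X_i.
Proof.
rewrite raddf_sum /=; under eq_bigr do rewrite linearZ /= act_X.
exact: sum_linX.
Qed.

Lemma act_symX i : act (symX i) = symX i.
Proof. by rewrite linearZ /= raddfD /= act_X act_linX addrC. Qed.

Lemma act_antiX i : act (antiX i) = - antiX i.
Proof. by rewrite linearZ /= raddfB /= act_X act_linX -scalerN opprB. Qed.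

Lemma act_antiXM i j : act (antiX i * antiX j) = antiX i * antiX j.
Proof. by rewrite rmorphM /= !act_antiX mulrNN. Qed.

Lemma act_sum_antiX_sqr : act (\sum_(i < n) antiX i ^+ 2) = \sum_(i < n) antiX i ^+ 2.
Proof.
by rewrite raddf_sum; apply: eq_bigr => i _; rewrite /= rmorphXn /= act_antiX sqrrN.
Qed.

Lemma sum_symX i : \sum_(j < n) s i j *: symX j = symX i.
Proof.
under eq_bigr do rewrite scalerA mulrC -scalerA scalerDr.
by rewrite -scaler_sumr big_split /= sum_linX addrC.
Qed.

Lemma sum_antiX i : \sum_(j < n) s i j *: antiX j = - antiX i.
Proof.
under eq_bigr do rewrite scalerA mulrC -scalerA scalerBr.
by rewrite -scaler_sumr sumrB sum_linX -scalerN opprB.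
Qed.

End Involution.

Section FixedInduction.
Variables (R : numFieldType) (n : nat) (s : 'M[R]_n).
Hypothesis s_invol : s *m s = 1%:M.
Variable P : {mpoly R[n]} -> Prop.
Hypotheses (PC : forall c, P c%:MP) (PD : forall p q, P p -> P q -> P (p + q))
  (PM : forall p q, P p -> P q -> P (p * q)) (P_symX : forall i, P (symX s i))
  (P_antiXM : forall i j, P (antiX s i * antiX s j)).

Let even p := P p /\ act s p = p.
Let odd p := exists g : 'I_n -> {mpoly R[n]},
  (forall i, even (g i)) /\ p = \sum_(i < n) antiX s i * g i.

Let evenC c : even c%:MP.
Proof. by split; [exact: PC | exact: comp_mpolyC]. Qed.

Let evenD p q : even p -> even q -> even (p + q).
Proof. by move=> [Pp sp] [Pq sq]; split; rewrite ?raddfD /= ?sp ?sq; auto. Qed.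

Let evenM p q : even p -> even q -> even (p * q).
Proof. by move=> [Pp sp] [Pq sq]; split; rewrite ?rmorphM /= ?sp ?sq; auto. Qed.

Let even_sum (F : 'I_n -> {mpoly R[n]}) : (forall i, even (F i)) -> even (\sum_i F i).
Proof. by move=> h; apply: big_ind => //; rewrite -mpolyC0. Qed.

Let even_antiXM i j : even (antiX s i * antiX s j).
Proof. by split; [exact: P_antiXM | exact: act_antiXM]. Qed.

Let oddD p q : odd p -> odd q -> odd (p + q).
Proof.
move=> [g [eg ->]] [h [eh ->]]; exists (g \+ h); split => [i|]; first exact: evenD.
by rewrite -big_split; apply: eq_bigr => i _; rewrite mulrDr.
Qed.

Let odd_evenM e p : even e -> odd p -> odd (e * p).
Proof.
move=> ee [g [eg ->]]; exists (fun i => e * g i); split => [i|]; first exact: evenM.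
by rewrite mulr_sumr; apply: eq_bigr => i _; rewrite mulrCA.
Qed.

Let even_oddM p q : odd p -> odd q -> even (p * q).
Proof.
move=> [g [eg ->]] [h [eh ->]].
rewrite mulr_suml; apply: even_sum => i; rewrite mulr_sumr; apply: even_sum => j.
rewrite mulrACA; apply: evenM (even_antiXM i j) (evenM (eg i) (eh j)).
Qed.

Let odd_antiX i : odd (antiX s i).
Proof.
exists (fun j => (j == i)%:R); split => [j|]; first by rewrite -mpolyC_nat; apply: evenC.
by rewrite (bigD1 i) //= eqxx mulr1 big1 ?addr0 // => j /negbTE ->; rewrite mulr0.
Qed.

Let act_odd p : odd p -> act s p = - p.
Proof.
move=> [g [eg ->]]; rewrite raddf_sum /= -sumrN; apply: eq_bigr => i _.
by rewrite rmorphM /= (act_antiX s_invol) (proj2 (eg i)) mulNr.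
Qed.

Let odd0 : odd 0.
Proof.
exists (fun _ => 0); split => [i|]; first by rewrite -mpolyC0; apply: evenC.
by rewrite big1 // => i _; rewrite mulr0.
Qed.

Let dec p := exists e o, [/\ even e, odd o & p = e + o].

Let decD p q : dec p -> dec q -> dec (p + q).
Proof.
move=> [e [o [ee oo ->]]] [e' [o' [ee' oo' ->]]].
by exists (e + e'), (o + o'); split; [exact: evenD | exact: oddD | rewrite addrACA].
Qed.

Let decM p q : dec p -> dec q -> dec (p * q).
Proof.
move=> [e [o [ee oo ->]]] [e' [o' [ee' oo' ->]]].
exists (e * e' + o * o'), (e * o' + e' * o); split.
- by apply: evenD; [exact: evenM | exact: even_oddM].
- by apply: oddD; exact: odd_evenM.
- by ring.
Qed.

Let decC c : dec c%:MP.
Proof. by exists c%:MP, 0; split; rewrite ?addr0. Qed.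

Let dec_all p : dec p.
Proof.
elim/mpolyind: p => [|c mm p _ _ dec_p]; first by rewrite -mpolyC0.
apply: decD => //; rewrite -mul_mpolyC mpolyXE_id; apply: decM => //.
apply: (big_ind dec) => [|q r|i _]; first by rewrite -mpolyC1; exact: decC.
  exact: decM.
elim: (mm i) => [|k IHk]; first by rewrite expr0 -mpolyC1; exact: decC.
rewrite exprS; apply: decM IHk.
exists (symX s i), (antiX s i); split; last by rewrite symX_add_antiX.
  by split; [exact: P_symX | exact: act_symX].
exact: odd_antiX.
Qed.

Lemma act_fixed_ind p : act s p = p -> P p.
Proof.
have [e [o [[Pe act_e] odd_o ->]]] := dec_all p.
rewrite raddfD /= act_e (act_odd odd_o) => /addrI /eqP.
rewrite eq_sym -subr_eq0 opprK -mulr2n -scaler_nat scaler_eq0 pnatr_eq0 /= => /eqP ->.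
by rewrite addr0.
Qed.

End FixedInduction.

Section PhiHomomorphism.
Variables (R : realType) (n m : nat) (pi : 'I_m -> {mpoly R[n]}).

Definition in_pi_alg (p : {mpoly R[n]}) :=
  exists g : {mpoly R[m]}, g \mPo [tuple pi i | i < m] = p.

Lemma in_pi_algC c : in_pi_alg c%:MP.
Proof. by exists c%:MP; rewrite comp_mpolyC. Qed.

Lemma in_pi_algD p q : in_pi_alg p -> in_pi_alg q -> in_pi_alg (p + q).
Proof. by move=> [g <-] [h <-]; exists (g + h); rewrite raddfD. Qed.

Lemma in_pi_algM p q : in_pi_alg p -> in_pi_alg q -> in_pi_alg (p * q).
Proof. by move=> [g <-] [h <-]; exists (g * h); rewrite rmorphM. Qed.

Lemma in_pi_algZ c p : in_pi_alg p -> in_pi_alg (c *: p).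
Proof. by move=> [g <-]; exists (c *: g); rewrite linearZ. Qed.

Lemma meval_comp_pi (g : {mpoly R[m]}) x :
  (g \mPo [tuple pi i | i < m]).@[x] = g.@[hilbert_map pi x].
Proof. by rewrite comp_mpoly_meval; apply: meval_eq => i; rewrite tnth_mktuple. Qed.

Lemma hilbert_map_in_variety x : real_variety pi (hilbert_map pi x).
Proof. by move=> g g_rel; rewrite -meval_comp_pi g_rel meval0. Qed.

Variable z : 'I_m -> R.
Hypothesis z_in : real_variety pi z.

Lemma phi_comp g : phi pi z (g \mPo [tuple pi i | i < m]) = g.@[z].
Proof.
rewrite /phi; set g0 := epsilon _ _.
have g0_comp : g0 \mPo [tuple pi i | i < m] = g \mPo [tuple pi i | i < m].
  by apply: (epsilon_spec _ (fun h => h \mPo _ = _)); exists g.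
apply/eqP; rewrite -subr_eq0 -mevalB; apply/eqP/z_in.
by rewrite /relation_ideal raddfB /= g0_comp subrr.
Qed.

Lemma phiC c : phi pi z c%:MP = c.
Proof. by rewrite -(comp_mpolyC c [tuple pi i | i < m]) phi_comp mevalC. Qed.

Lemma phiD p q : in_pi_alg p -> in_pi_alg q ->
  phi pi z (p + q) = phi pi z p + phi pi z q.
Proof. by move=> [g <-] [h <-]; rewrite -raddfD !phi_comp mevalD. Qed.

Lemma phiM p q : in_pi_alg p -> in_pi_alg q ->
  phi pi z (p * q) = phi pi z p * phi pi z q.
Proof. by move=> [g <-] [h <-]; rewrite -rmorphM !phi_comp mevalM. Qed.

Lemma phiZ c p : in_pi_alg p -> phi pi z (c *: p) = c * phi pi z p.
Proof. by move=> [g <-]; rewrite -linearZ !phi_comp mevalZ. Qed.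

Lemma phi_lincomb (I : finType) (c : I -> R) (F : I -> {mpoly R[n]}) :
    (forall i, in_pi_alg (F i)) ->
  phi pi z (\sum_i c i *: F i) = \sum_i c i * phi pi z (F i).
Proof.
move=> F_in; apply: (proj2 (big_rec2 (fun p y => in_pi_alg p /\ phi pi z p = y) _ _)).
  by rewrite -mpolyC0 phiC; split => //; exact: in_pi_algC.
move=> i p y _ [p_in <-]; have cF_in := in_pi_algZ (c i) (F_in i).
by rewrite phiD // phiZ //; split => //; exact: in_pi_algD.
Qed.

Lemma phi_pi i : phi pi z (pi i) = z i.
Proof.
have -> : pi i = 'X_i \mPo [tuple pi i | i < m].
  by rewrite comp_mpolyXU -tnth_nth tnth_mktuple.
by rewrite phi_comp mevalXU.
Qed.

End PhiHomomorphism.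

Lemma phi_hilbert_map (R : realType) (n m : nat) (pi : 'I_m -> {mpoly R[n]}) x h :
  in_pi_alg pi h -> phi pi (hilbert_map pi x) h = h.@[x].
Proof.
by move=> [g <-]; rewrite phi_comp ?meval_comp_pi //; exact: hilbert_map_in_variety.
Qed.

Lemma rank_one_factorization (R : rcfType) (n : nat) (s : 'M[R]_n)
    (c : 'I_n -> 'I_n -> R) :
    (forall i j k l, c i j * c k l = c i k * c j l) ->
    (forall i k, \sum_(j < n) s i j * c j k = - c i k) ->
    0 <= \sum_(i < n) c i i ->
  exists b : 'I_n -> R, (forall i j, b i * b j = c i j) /\
    (forall i, \sum_(j < n) s i j * b j = - b i).
Proof.
move=> c_rank1 c_anti c_tr.
have [/existsP [k ckk_gt0]|no_pos] := boolP [exists k, 0 < c k k].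
  exists (fun i => c i k / Num.sqrt (c k k)); split => [i j|i].
    rewrite mulrACA -expr2 exprVn sqr_sqrtr ?ltW // -c_rank1.
    by rewrite mulfK // gt_eqF.
  by under eq_bigr do rewrite mulrA; rewrite -mulr_suml c_anti mulNr.
have diag_le0 k : c k k <= 0.
  by rewrite leNgt; apply: contraNN no_pos => ckk_gt0; apply/existsP; exists k.
have diag0 k : c k k = 0.
  have opp_ge0 i : true -> 0 <= - c i i by rewrite oppr_ge0.
  have sum0 : \sum_(i < n) - c i i = 0.
    by apply/eqP; rewrite sumrN oppr_eq0 eq_le c_tr andbT sumr_le0.
  by apply/eqP; rewrite -oppr_eq0 (psumr_eq0P opp_ge0 sum0).
have c0 i j : c i j = 0 by apply/eqP; rewrite -sqrf_eq0 expr2 c_rank1 !diag0 mul0r.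
exists (fun _ => 0); split => [i j|i]; first by rewrite mul0r c0.
by rewrite big1 ?oppr0 // => j _; rewrite mulr0.
Qed.

Section Preimage.
Variables (R : realType) (n m : nat) (s : 'M[R]_n) (pi : 'I_m -> {mpoly R[n]}).
Variable (z : 'I_m -> R).
Hypotheses (s_invol : s *m s = 1%:M) (z_in : real_variety pi z).
Hypothesis fixed_in_pi_alg : forall h, act s h = h -> in_pi_alg pi h.

Local Notation ph := (phi pi z).

Lemma in_pi_alg_symX i : in_pi_alg pi (symX s i).
Proof. exact/fixed_in_pi_alg/act_symX. Qed.

Lemma in_pi_alg_antiXM i j : in_pi_alg pi (antiX s i * antiX s j).
Proof. exact/fixed_in_pi_alg/act_antiXM. Qed.

Lemma phi_eq_meval x h :
    (forall i, ph (symX s i) = (symX s i).@[x]) ->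
    (forall i j, ph (antiX s i * antiX s j) = (antiX s i * antiX s j).@[x]) ->
  act s h = h -> ph h = h.@[x].
Proof.
move=> phi_symX phi_antiXM h_fixed.
apply: (proj2 (@act_fixed_ind _ _ _ s_invol
  (fun p => in_pi_alg pi p /\ ph p = p.@[x]) _ _ _ _ _ h h_fixed)).
- by move=> c; rewrite phiC ?mevalC //; split => //; exact: in_pi_algC.
- move=> p q [p_in php] [q_in phq].
  by rewrite phiD // mevalD php phq; split => //; exact: in_pi_algD.
- move=> p q [p_in php] [q_in phq].
  by rewrite phiM // mevalM php phq; split => //; exact: in_pi_algM.
- by move=> i; split; [exact: in_pi_alg_symX | exact: phi_symX].
- by move=> i j; split; [exact: in_pi_alg_antiXM | exact: phi_antiXM].
Qed.

Lemma sum_phi_symX i : \sum_(j < n) s i j * ph (symX s j) = ph (symX s i).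
Proof.
by rewrite -phi_lincomb ?sum_symX // => j; exact: in_pi_alg_symX.
Qed.

Lemma sum_phi_antiXM i k :
  \sum_(j < n) s i j * ph (antiX s j * antiX s k) = - ph (antiX s i * antiX s k).
Proof.
rewrite -phi_lincomb //; last by move=> j; exact: in_pi_alg_antiXM.
under eq_bigr do rewrite scalerAl.
by rewrite -mulr_suml sum_antiX // mulNr -scaleN1r phiZ ?mulN1r //; exact: in_pi_alg_antiXM.
Qed.

Lemma phi_antiXM_rank_one i j k l :
  ph (antiX s i * antiX s j) * ph (antiX s k * antiX s l) =
  ph (antiX s i * antiX s k) * ph (antiX s j * antiX s l).
Proof.
rewrite -!phiM //; try exact: in_pi_alg_antiXM.
by rewrite (mulrACA (antiX s i)).
Qed.

Lemma hilbert_map_preimage :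
    (forall i, act s (pi i) = pi i) ->
    0 <= ph (\sum_(i < n) antiX s i ^+ 2) ->
  exists x, z = hilbert_map pi x.
Proof.
move=> pi_fixed f_ge0.
have trace_ge0 : 0 <= \sum_(i < n) ph (antiX s i * antiX s i).
  move: f_ge0; under eq_bigr do rewrite expr2 -[_ * _]scale1r.
  rewrite phi_lincomb //; last by move=> i; exact: in_pi_alg_antiXM.
  by under eq_bigr do rewrite mul1r.
have [b [bb sb]] := rank_one_factorization phi_antiXM_rank_one sum_phi_antiXM trace_ge0.
pose a i := ph (symX s i).
have ab_eval i := meval_symX_antiX i sum_phi_symX sb.
exists (a \+ b); apply: functional_extensionality => i.
rewrite /hilbert_map -(phi_pi z_in); apply: phi_eq_meval (pi_fixed i) => [j|j k].
  by rewrite (proj1 (ab_eval j)).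
by rewrite mevalM (proj2 (ab_eval j)) (proj2 (ab_eval k)).
Qed.

End Preimage.

Lemma invmx_invol (R : comUnitRingType) (n : nat) (s : 'M[R]_n) :
  s *m s = 1%:M -> invmx s = s.
Proof.
move=> s_invol; have [s_unit _] := mulmx1_unit s_invol.
by rewrite -[RHS](mulKmx s_unit s) s_invol mulmx1.
Qed.

Lemma order2_subgroup (R : realType) (n : nat) (G : seq 'M[R]_n) :
    is_finite_subgroup_GL G -> size G = 2%N ->
  exists2 s, s *m s = 1%:M & perm_eq G [:: 1%:M; s].
Proof.
move=> [G_uniq G1 G_inv G_mul] G2.
have G_perm := perm_to_rem G1.
have [s rem1] : exists s, rem 1%:M G = [:: s].
  move: (size_rem G1); rewrite G2.
  by case: (rem 1%:M G) => [|s []] // _; exists s.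
rewrite rem1 in G_perm; exists s => //.
have [sG s_neq1] : s \in G /\ s != 1%:M.
  split; first by rewrite (perm_mem G_perm) !inE eqxx orbT.
  by move: G_uniq; rewrite (perm_uniq G_perm) /= inE andbT eq_sym.
have [s_unit _] := G_inv s sG.
move: (G_mul s s sG sG); rewrite (perm_mem G_perm) !inE => /orP [/eqP // | /eqP ss].
by move: s_neq1; rewrite -(mulKmx s_unit s) ss mulVmx ?eqxx.
Qed.

Lemma mact_invol (R : realType) (n : nat) (s : 'M[R]_n) h :
  s *m s = 1%:M -> mact s h = act s h.
Proof. by move=> s_invol; rewrite /mact invmx_invol. Qed.

Lemma mact1 (R : realType) (n : nat) (h : {mpoly R[n]}) : mact 1%:M h = h.
Proof.
rewrite /mact invmx1 -[RHS]comp_mpoly_id; congr comp_mpoly.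
apply: eq_from_tnth => i; rewrite !tnth_mktuple (bigD1 i) //= big1 ?addr0.
  by rewrite mxE eqxx scale1r.
by move=> j /negbTE ji; rewrite mxE eq_sym ji scale0r.
Qed.

Section OrderTwo.
Variables (R : realType) (n : nat) (G : seq 'M[R]_n) (s : 'M[R]_n).
Hypotheses (s_invol : s *m s = 1%:M) (G_perm : perm_eq G [:: 1%:M; s]).

Lemma is_invariant_order2 h : is_invariant G h <-> act s h = h.
Proof.
rewrite /is_invariant; split => [h_inv|h_fixed t].
  by rewrite -mact_invol // h_inv // (perm_mem G_perm) !inE eqxx orbT.
rewrite (perm_mem G_perm) !inE => /orP [] /eqP ->; first exact: mact1.
by rewrite mact_invol.
Qed.

Lemma reynolds_order2 i : reynolds G 'X_i = symX s i.
Proof.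
rewrite /reynolds (perm_big _ G_perm) (perm_size G_perm) /= big_cons big_seq1.
by rewrite mact1 mact_invol // act_X.
Qed.

Lemma X_sub_reynolds i : 'X_i - reynolds G 'X_i = antiX s i.
Proof. by rewrite reynolds_order2 -(symX_add_antiX s i) addrAC subrr add0r. Qed.

End OrderTwo.

Theorem lemma3p10 (R : realType) (n m : nat) (G : seq 'M[R]_n)
    (pi : 'I_m -> {mpoly R[n]}) :
  is_finite_subgroup_GL G -> size G = 2%N ->
  fundamental_invariants G pi ->
  let fi := fun i : 'I_n => 'X_i - reynolds G 'X_i in
  let f := \sum_(i < n) fi i ^+ 2 in
  is_invariant G f /\
  (forall z : 'I_m -> R,
     (exists x : 'I_n -> R, z = hilbert_map pi x) <->
     (real_variety pi z /\ 0 <= phi pi z f)).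
Proof.
move=> G_sub G2 [pi_inv pi_fund] fi f.
have [s s_invol G_perm] := order2_subgroup G_sub G2.
have invE := is_invariant_order2 s_invol G_perm.
have fE : f = \sum_(i < n) antiX s i ^+ 2.
  by apply: eq_bigr => i _; rewrite /fi (X_sub_reynolds s_invol G_perm).
have f_fixed : act s f = f by rewrite fE act_sum_antiX_sqr.
have fixed_in_pi_alg h : act s h = h -> in_pi_alg pi h.
  by move/invE/pi_fund => [g ->]; exists g.
split=> [|z]; first by apply/invE.
split=> [[x ->]|[z_in f_ge0]].
  split; first exact: hilbert_map_in_variety.
  rewrite phi_hilbert_map; last exact: fixed_in_pi_alg f_fixed.
  by rewrite fE raddf_sum sumr_ge0 // => i _; rewrite /= rmorphXn /= sqr_ge0.
apply: hilbert_map_preimage s_invol z_in fixed_in_pi_alg _ _ => [i|].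
  by rewrite -invE; apply: pi_inv.
by rewrite -fE.
Qed.
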